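(* Let $d\ge 1$ and let $\mathcal{F}$ be a class of real-valued integrable functions on $[0,1]^d$; for $f\in\mathcal{F}$ write $\mu(f)=\int_{[0,1]^d} f(\boldsymbol{x})\,\mathrm{d}\boldsymbol{x}$. Let $\alpha>1$ and $0<m\le M<\infty$. Suppose that $\mathcal{F}$ has a superlinear root mean square lower bound, namely for every $n\ge 1$ and every choice of random points $\boldsymbol{x}_1,\dots,\boldsymbol{x}_n\in[0,1]^d$ (with arbitrary joint distribution), $$\sup_{f\in\mathcal{F}}\mathbb{E}\biggl(\biggl|\frac1n\sum_{i=1}^n f(\boldsymbol{x}_i)-\mu(f)\biggr|^2\biggr)^{1/2}> m n^{-\alpha},$$ where $\mathbb{E}$ denotes expectation over the randomness of the points. Suppose further that there is an infinite sequence of random points $\boldsymbol{x}_1,\boldsymbol{x}_2,\dots\in[0,1]^d$ (with arbitrary joint distribution; no unbiasedness or correlation assumptions) and a strictly increasing sequence of positive integers $n_1<n_2<\cdots$ such that $$\sup_{f\in\mathcal{F}}\mathbb{E}\biggl(\biggl|\frac1n\sum_{i=1}^n f(\boldsymbol{x}_i)-\mu(f)\biggr|^2\biggr)^{1/2}\le M n^{-\alpha}\quad\text{for all } n\in\{n_1,n_2,\dots\}.$$ Then for every $k\ge1$, the ratio $\rho=\rho_k=n_{k+1}/n_k$ satisfies $$\rho \ge 1 + \biggl[\frac{m}{M}\bigl(1+\rho^{1-\alpha}\bigr)^{-1}\biggr]^{1/(\alpha-1)} \ge 1 + \Bigl(\frac{m}{2M}\Bigr)^{1/(\alpha-1)}.$$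 *)

From HB Require Import structures.
From mathcomp Require Import all_boot all_order all_algebra.
From mathcomp Require Import all_classical all_reals all_analysis.
Set Implicit Arguments. Unset Strict Implicit. Unset Printing Implicit Defensive.
Import Order.TTheory GRing.Theory Num.Theory.
Local Open Scope classical_set_scope.
Local Open Scope ring_scope.

Definition cube (R : realType) (d : nat) : set (d.-tuple R) :=
  [set t | forall i : 'I_d, 0 <= tnth t i <= 1].
Arguments cube : clear implicits.

Definition box (R : realType) (d : nat) (a b : d.-tuple R) : set (d.-tuple R) :=
  [set t | forall i : 'I_d, tnth a i <= tnth t i <= tnth b i].

(** [lam] is d-dimensional Lebesgue measure: it gives every box its volume
    (this determines it uniquely on the product Borel sigma-algebra). *)
Definition is_lebesgue_measure (R : realType) (d : nat)
    (lam : {measure set (d.-tuple R) -> \bar R}) : Prop :=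
  forall a b : d.-tuple R, (forall i : 'I_d, tnth a i <= tnth b i) ->
    lam (box a b) = (\prod_(i < d) (tnth b i - tnth a i))%:E.

Definition mu (R : realType) (d : nat) (lam : {measure set (d.-tuple R) -> \bar R})
    (f : d.-tuple R -> R) : R :=
  Rintegral lam (cube R d) f.

(** quadrature error (1/n) sum_{i=1}^n f(x_i(w)) - mu(f); the points x_1,...,x_n
    are x 0, ..., x (n-1) *)
Definition qmc_err (R : realType) (d : nat) (lam : {measure set (d.-tuple R) -> \bar R})
    (T : Type) (f : d.-tuple R -> R) (x : nat -> T -> d.-tuple R) (n : nat) (w : T) : R :=
  n%:R^-1 * (\sum_(i < n) f (x i w)) - mu lam f.

Definition rmse (R : realType) (d : nat) (lam : {measure set (d.-tuple R) -> \bar R})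
    (dO : measure_display) (O : measurableType dO) (P : probability O R)
    (f : d.-tuple R -> R) (x : nat -> O -> d.-tuple R) (n : nat) : \bar R :=
  sqrte (\int[P]_w ((qmc_err lam f x n w) ^+ 2)%:E)%E.

Definition sup_rmse (R : realType) (d : nat) (lam : {measure set (d.-tuple R) -> \bar R})
    (F : set (d.-tuple R -> R))
    (dO : measure_display) (O : measurableType dO) (P : probability O R)
    (x : nat -> O -> d.-tuple R) (n : nat) : \bar R :=
  ereal_sup [set rmse lam P f x n | f in F].

Definition random_points (R : realType) (d : nat)
    (dO : measure_display) (O : measurableType dO) (x : nat -> O -> d.-tuple R) : Prop :=
  (forall i, measurable_fun setT (x i)) /\ (forall i w, cube R d (x i w)).

From HB Require Import structures.
From mathcomp Require Import all_boot all_order all_algebra.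
From mathcomp Require Import all_classical all_reals all_analysis.
From mathcomp Require Import ring lra.

Set Implicit Arguments.
Unset Strict Implicit.
Unset Printing Implicit Defensive.
Import Order.TTheory GRing.Theory Num.Theory.
Local Open Scope classical_set_scope.
Local Open Scope ring_scope.

(* The points x_{n_k+1}, ..., x_{n_{k+1}} form a quadrature rule with
   L = n_{k+1} - n_k points whose error is
   (n_{k+1} err_{n_{k+1}} - n_k err_{n_k}) / L, so by Minkowski's inequality
   its RMSE is at most (n_{k+1} M n_{k+1}^-alpha + n_k M n_k^-alpha) / L.
   Comparing with the lower bound m L^-alpha for rules with L points forces
   L / n_k = rho - 1 to be large, which is the claimed bound on rho. *)

Section RootMeanSquare.
Variables (R : realType) (dO : measure_display) (O : measurableType dO).
Variable P : probability O R.

Lemma sqrte_integral_sqr (g : O -> R) :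
  sqrte (\int[P]_w ((g w) ^+ 2)%:E)%E = Lnorm P 2%:E (EFin \o g).
Proof.
rewrite unlock /= -poweR12_sqrt; last first.
  by apply: integral_ge0 => w _; rewrite lee_fin sqr_ge0.
congr (_ `^ _)%E; apply: eq_integral => w _ /=.
by rewrite powR_mulrn ?normr_ge0 // real_normK // num_real.
Qed.

Lemma sqrte_integral_sqrZ (c : R) (g : O -> R) :
  0 <= c -> measurable_fun setT g ->
  sqrte (\int[P]_w ((c * g w) ^+ 2)%:E)%E =
  (c%:E * sqrte (\int[P]_w ((g w) ^+ 2)%:E))%E.
Proof.
move=> c0 mg; under eq_integral do rewrite exprMn EFinM.
rewrite ge0_integralZl_EFin ?sqr_ge0 //; first last.
- by apply/measurable_realfun.measurable_EFinP; exact: measurable_realfun.measurable_funX.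
- by move=> w _; rewrite lee_fin sqr_ge0.
by rewrite sqrteM ?lee_fin ?sqr_ge0 //= sqrtr_sqr ger0_norm.
Qed.

End RootMeanSquare.

Section SplitRule.
Variables (R : realType) (d : nat) (lam : {measure set (d.-tuple R) -> \bar R}).
Variables (dO : measure_display) (O : measurableType dO) (P : probability O R).
Variable x : nat -> O -> d.-tuple R.

Lemma measurable_qmc_err (f : d.-tuple R -> R) (n : nat) :
  (forall i, measurable_fun setT (f \o x i)) ->
  measurable_fun setT (qmc_err lam f x n).
Proof.
move=> mfx; apply: measurable_realfun.measurable_funB; last exact: measurable_cst.
apply: measurable_realfun.measurable_funM; first exact: measurable_cst.
by apply: measurable_sum => i; exact: mfx.
Qed.

Lemma qmc_err_shift (f : d.-tuple R -> R) (n0 L : nat) (w : O) :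
  (0 < n0)%N -> (0 < L)%N ->
  qmc_err lam f (fun i => x (n0 + i)%N) L w =
  (n0 + L)%:R / L%:R * qmc_err lam f x (n0 + L) w
  - n0%:R / L%:R * qmc_err lam f x n0 w.
Proof.
move=> n0_gt0 L_gt0; rewrite /qmc_err big_split_ord /= natrD.
have a0 : (n0%:R : R) != 0 by rewrite pnatr_eq0 -lt0n.
have b0 : (L%:R : R) != 0 by rewrite pnatr_eq0 -lt0n.
have ab0 : (n0%:R + L%:R : R) != 0 by rewrite -natrD pnatr_eq0 -lt0n addn_gt0 n0_gt0.
by field; rewrite a0 b0 ab0.
Qed.

Lemma rmse_shift_le (f : d.-tuple R -> R) (n0 L : nat) :
  (forall i, measurable_fun setT (f \o x i)) -> (0 < n0)%N -> (0 < L)%N ->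
  (rmse lam P f (fun i => x (n0 + i)%N) L <=
   ((n0 + L)%:R / L%:R)%:E * rmse lam P f x (n0 + L) +
   (n0%:R / L%:R)%:E * rmse lam P f x n0)%E.
Proof.
move=> mfx n0_gt0 L_gt0.
set a := (n0 + L)%:R / L%:R; set b := n0%:R / L%:R.
have a0 : 0 <= a by rewrite divr_ge0.
have b0 : 0 <= b by rewrite divr_ge0.
have m1 := measurable_qmc_err (n0 + L) mfx.
have m0 := measurable_qmc_err n0 mfx.
have -> : rmse lam P f (fun i => x (n0 + i)%N) L =
    Lnorm P 2%:E (EFin \o ((fun w => a * qmc_err lam f x (n0 + L) w)
                           \+ (fun w => - (b * qmc_err lam f x n0 w)))).
  rewrite -sqrte_integral_sqr /rmse; congr sqrte.
  by apply: eq_integral => w _; rewrite qmc_err_shift.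
apply: le_trans.
  apply: minkowski_EFin; last by rewrite ler1n.
  - by apply: measurable_realfun.measurable_funM => //; exact: measurable_cst.
  - apply: measurable_realfun.measurable_funN.
    by apply: measurable_realfun.measurable_funM => //; exact: measurable_cst.
rewrite -!sqrte_integral_sqr.
under [X in (_ + sqrte X)%E]eq_integral do rewrite sqrrN.
by rewrite !sqrte_integral_sqrZ.
Qed.

Lemma sup_rmse_shift_le (F : set (d.-tuple R -> R)) (n0 L : nat) :
  (forall f, F f -> forall i, measurable_fun setT (f \o x i)) ->
  (0 < n0)%N -> (0 < L)%N ->
  (sup_rmse lam F P (fun i => x (n0 + i)%N) L <=
   ((n0 + L)%:R / L%:R)%:E * sup_rmse lam F P x (n0 + L) +
   (n0%:R / L%:R)%:E * sup_rmse lam F P x n0)%E.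
Proof.
move=> mF n0_gt0 L_gt0; apply: ge_ereal_sup => _ [f Ff <-].
apply: (le_trans (rmse_shift_le (mF f Ff) n0_gt0 L_gt0)).
by apply: leeD; apply: lee_wpmul2l; rewrite ?lee_fin ?divr_ge0 //;
  apply: ereal_sup_ubound; exists f.
Qed.

End SplitRule.

Lemma measurable_cube (R : realType) (d : nat) : measurable (cube R d).
Proof.
have -> : cube R d = \bigcap_(i in [set: 'I_d]) ((@tnth d R ^~ i) @^-1` `[0, 1]).
  apply/seteqP; split => t /=.
    by move=> H i _ /=; rewrite in_itv /= H.
  by move=> H i; have := H i I; rewrite /= in_itv.
apply: fin_bigcap_measurable; first exact: finite_finset.
move=> i _; rewrite -[X in measurable X]setTI.
by apply: measurable_tnth => //; exact: measurable_itv.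
Qed.

Lemma random_points_measurable_comp (R : realType) (d : nat)
    (dO : measure_display) (O : measurableType dO) (x : nat -> O -> d.-tuple R)
    (f : d.-tuple R -> R) :
  random_points x -> measurable_fun (cube R d) f ->
  forall i, measurable_fun setT (f \o x i).
Proof.
move=> [mx xcube] mf i; apply: (measurable_comp (@measurable_cube R d)) => //.
by move=> _ [w _ <-]; exact: xcube.
Qed.

Section RatioBound.
Variable R : realType.

Lemma ratio_ge_gap (c s rho : R) : 0 < s -> 1 <= rho -> 0 <= c ->
  c <= (rho - 1) `^ s * (1 + rho `^ (- s)) ->
  1 + (c * (1 + rho `^ (- s))^-1) `^ s^-1 <= rho.
Proof.
move=> s0 rho1 c0 hc.
have D0 : 0 < 1 + rho `^ (- s) by rewrite ltr_pwDl ?powR_ge0.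
have rho10 : 0 <= rho - 1 by rewrite subr_ge0.
rewrite -lerBrDl.
have -> : rho - 1 = ((rho - 1) `^ s) `^ s^-1.
  by rewrite -powRrM mulfV ?gt_eqF // powRr1.
apply: ge0_ler_powR; rewrite ?nnegrE ?invr_ge0 ?(ltW s0) ?powR_ge0 //.
  by rewrite divr_ge0 ?(ltW D0).
by rewrite ler_pdivrMr.
Qed.

Lemma gap_ge_half (c s rho : R) : 0 < s -> 1 <= rho -> 0 <= c ->
  (c / 2) `^ s^-1 <= (c * (1 + rho `^ (- s))^-1) `^ s^-1.
Proof.
move=> s0 rho1 c0.
have rho_ge0 : 0 <= rho := le_trans ler01 rho1.
have rhos1 : rho `^ (- s) <= 1.
  have : 1 `^ s <= rho `^ s by rewrite ge0_ler_powR ?nnegrE ?(ltW s0).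
  by rewrite powR1 powRN invf_le1 // powR_gt0 // (lt_le_trans ltr01 rho1).
have D0 : 0 < 1 + rho `^ (- s) by rewrite ltr_pwDl ?powR_ge0.
apply: ge0_ler_powR; rewrite ?nnegrE ?invr_ge0 ?(ltW s0) ?divr_ge0 ?(ltW D0) //.
rewrite ler_wpM2l // lef_pV2 ?posrE //.
lra.
Qed.

Lemma powRV (x s : R) : 0 < x -> (x^-1) `^ s = (x `^ s)^-1.
Proof. by move=> x0; rewrite -powR_inv1 ?ltW // -powRrM mulN1r powRN. Qed.

Lemma powR_div (x y s : R) : 0 <= x -> 0 < y -> (x / y) `^ s = x `^ s / y `^ s.
Proof. by move=> x0 y0; rewrite powRM ?invr_ge0 ?(ltW y0) // powRV. Qed.

Lemma mulr_powRN (y a : R) : 0 < y -> y * y `^ (- a) = y `^ (1 - a).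
Proof.
move=> y0; rewrite powRD; last by apply/implyP => _; rewrite gt_eqF.
by rewrite powRr1 // ltW.
Qed.

(* Multiplied by l, the hypothesis reads m l^-s < M ((a+l)^-s + a^-s)
   with s = al - 1; dividing by M l^-s gives the claim. *)
Lemma error_bounds_ratio_gap (a l m M al : R) :
  0 < a -> 0 < l -> 1 < al -> 0 < m -> 0 < M ->
  m * l `^ (- al) < (a + l) / l * (M * (a + l) `^ (- al)) + a / l * (M * a `^ (- al)) ->
  m / M <= ((a + l) / a - 1) `^ (al - 1) * (1 + ((a + l) / a) `^ (- (al - 1))).
Proof.
move=> a0 l0 al1 m0 M0 hml.
have al0 : 0 < a + l by rewrite addr_gt0.
set s := al - 1.
have hmlMs : m * l `^ (- s) < M * ((a + l) `^ (- s) + a `^ (- s)).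
  have -> : - s = 1 - al by rewrite /s opprB.
  rewrite -!mulr_powRN //.
  have -> : M * ((a + l) * (a + l) `^ (- al) + a * a `^ (- al)) =
      l * ((a + l) / l * (M * (a + l) `^ (- al)) + a / l * (M * a `^ (- al))).
    by field; rewrite gt_eqF.
  by rewrite mulrCA ltr_pM2l.
have A0 : 0 < a `^ s by rewrite powR_gt0.
have B0 : 0 < (a + l) `^ s by rewrite powR_gt0.
have P0 : 0 < l `^ s by rewrite powR_gt0.
have -> : (a + l) / a - 1 = l / a by field; rewrite gt_eqF.
rewrite powRN !powR_div ?(ltW a0) ?(ltW l0) ?(ltW al0) //.
move: hmlMs; rewrite !powRN ltr_pdivrMr // => hmlMs.
rewrite ler_pdivrMr //; apply/ltW/(lt_le_trans hmlMs).
by rewrite le_eqVlt; apply/orP; left; apply/eqP; field; rewrite !gt_eqF.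
Qed.

Lemma ratio_lower_bounds (a l m M al : R) :
  0 < a -> 0 < l -> 1 < al -> 0 < m -> m <= M ->
  m * l `^ (- al) < (a + l) / l * (M * (a + l) `^ (- al)) + a / l * (M * a `^ (- al)) ->
  let rho := (a + l) / a in
  1 + ((m / M) * (1 + rho `^ (1 - al))^-1) `^ (al - 1)^-1 <= rho /\
  1 + (m / (2 * M)) `^ (al - 1)^-1
    <= 1 + ((m / M) * (1 + rho `^ (1 - al))^-1) `^ (al - 1)^-1.
Proof.
move=> a0 l0 al1 m0 mM hml rho.
have M0 : 0 < M := lt_le_trans m0 mM.
have s0 : 0 < al - 1 by rewrite subr_gt0.
have rho1 : 1 <= rho by rewrite /rho ler_pdivlMr // mul1r lerDl ltW.
have c0 : 0 <= m / M by rewrite divr_ge0 ?ltW.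
have -> : 1 - al = - (al - 1) by rewrite opprB.
split.
  exact: ratio_ge_gap s0 rho1 c0 (error_bounds_ratio_gap a0 l0 al1 m0 M0 hml).
rewrite lerD2l (_ : m / (2 * M) = m / M / 2); last by field; rewrite !gt_eqF.
exact: gap_ge_half.
Qed.

End RatioBound.

Theorem theorem2 (R : realType) (d : nat) (hd : (1 <= d)%N)
  (lam : {measure set (d.-tuple R) -> \bar R}) (hlam : is_lebesgue_measure lam)
  (F : set (d.-tuple R -> R))
  (hF : forall f, F f -> lam.-integrable (cube R d) (EFin \o f))
  (alpha m M : R) (halpha : 1 < alpha) (hm : 0 < m) (hmM : m <= M)
  (hlower : forall n : nat, (1 <= n)%N ->
     forall (dO : measure_display) (O : measurableType dO) (P : probability O R)
            (y : nat -> O -> d.-tuple R),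
       random_points y ->
       ((m * n%:R `^ (- alpha))%:E < sup_rmse lam F P y n)%E)
  (dO : measure_display) (O : measurableType dO) (P : probability O R)
  (x : nat -> O -> d.-tuple R) (hx : random_points x)
  (nk : nat -> nat) (hn1 : (1 <= nk 0)%N) (hninc : forall k, (nk k < nk k.+1)%N)
  (hupper : forall k, (sup_rmse lam F P x (nk k) <= (M * (nk k)%:R `^ (- alpha))%:E)%E) :
  forall k : nat,
    let rho := (nk k.+1)%:R / (nk k)%:R in
    1 + ((m / M) * (1 + rho `^ (1 - alpha))^-1) `^ (alpha - 1)^-1 <= rho /\
    1 + (m / (2 * M)) `^ (alpha - 1)^-1
      <= 1 + ((m / M) * (1 + rho `^ (1 - alpha))^-1) `^ (alpha - 1)^-1.
Proof.
move=> k.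
have nk_gt0 j : (0 < nk j)%N by elim: j => // j IH; exact: ltn_trans IH (hninc j).
set n0 := nk k; set L := (nk k.+1 - n0)%N.
have n0_gt0 : (0 < n0)%N := nk_gt0 k.
have L_gt0 : (0 < L)%N by rewrite subn_gt0 hninc.
have n1E : nk k.+1 = (n0 + L)%N by rewrite subnKC // (ltnW (hninc k)).
have mF f : F f -> forall i, measurable_fun setT (f \o x i).
  move=> Ff; apply: random_points_measurable_comp hx _.
  by apply/measurable_realfun.measurable_EFinP; exact: measurable_int (hF f Ff).
have ry : random_points (fun i => x (n0 + i)%N).
  by split => [i|i w]; [exact: hx.1 | exact: hx.2].
rewrite n1E natrD; apply: ratio_lower_bounds; rewrite ?ltr0n ?n0_gt0 //.
rewrite -lte_fin; apply: (lt_le_trans (hlower L L_gt0 _ _ P _ ry)).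
apply: (le_trans (sup_rmse_shift_le lam P mF n0_gt0 L_gt0)).
rewrite -natrD -n1E EFinD (EFinM (_ / _)) (EFinM (_ / _)).
by apply: leeD; apply: lee_wpmul2l; rewrite ?lee_fin ?divr_ge0 //; exact: hupper.
Qed.
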